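(* Let $v:\mathbf S\to\mathbb R_{\ge 0}$ be submodular over signals (SOS). If $v$ is monotone, then $v$ is self-bounding (i.e. $1$-self-bounding). In general (without monotonicity), $v$ is $2$-self-bounding.
   Context: There are $n$ bidders; each signal space $S_i\subseteq\mathbb R$ is totally ordered, $\mathbf S=S_1\times\cdots\times S_n$. For $\mathbf s\in\mathbf S$, $\mathbf s_{-i}$ denotes the profile without coordinate $i$ and $(o_i,\mathbf s_{-i})$ the profile with $s_i$ replaced by $o_i\in S_i$. Write $\mathbf s\succeq\mathbf t$ if $s_i\ge t_i$ for all $i$. A function $v:\mathbf S\to\mathbb R_{\ge0}$ is monotone if $v(\mathbf s)\ge v(\mathbf t)$ whenever $\mathbf s\succeq\mathbf t$. It is submodular over signals (SOS) if for every $i\in[n]$, every $\mathbf s\succeq\mathbf t$: $v(s_i,\mathbf s_{-i})-v(t_i,\mathbf s_{-i})\le v(s_i,\mathbf t_{-i})-v(t_i,\mathbf t_{-i})$. The lower estimate is $\underline v^{(i)}(\mathbf s)=\inf_{o_i\in S_i}v(o_i,\mathbf s_{-i})$. For $d\in[n]$, $v$ is $d$-self-bounding if for every $\mathbf s\in\mathbf S$, $\sum_{i=1}^n\big(v(\mathbf s)-\underline v^{(i)}(\mathbf s)\big)\le d\cdot v(\mathbf s)$; it is self-bounding if this holds with $d=1$. *)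

From HB Require Import structures.
From mathcomp Require Import all_boot all_order all_algebra.
From mathcomp Require Import boolp classical_sets reals.
Set Implicit Arguments. Unset Strict Implicit. Unset Printing Implicit Defensive.
Import Order.TTheory GRing.Theory Num.Theory.
Local Open Scope ring_scope.
Local Open Scope classical_set_scope.

Section Defs.
Variables (R : realType) (n : nat).

(* A signal profile is a function 'I_n -> R; S i is the signal space of bidder i. *)
Definition profile := 'I_n -> R.

Definition in_prod (S : 'I_n -> set R) (s : profile) : Prop := forall i, S i (s i).

Definition upd (s : profile) (i : 'I_n) (o : R) : profile :=
  fun j => if j == i then o else s j.

Definition pdom (s t : profile) : Prop := forall i, t i <= s i.

Definition nonneg_on (S : 'I_n -> set R) (v : profile -> R) : Prop :=
  forall s, in_prod S s -> 0 <= v s.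

Definition monotone_on (S : 'I_n -> set R) (v : profile -> R) : Prop :=
  forall s t, in_prod S s -> in_prod S t -> pdom s t -> v t <= v s.

Definition SOS (S : 'I_n -> set R) (v : profile -> R) : Prop :=
  forall (i : 'I_n) s t, in_prod S s -> in_prod S t -> pdom s t ->
    v (upd s i (s i)) - v (upd s i (t i)) <= v (upd t i (s i)) - v (upd t i (t i)).

Definition lower_est (S : 'I_n -> set R) (v : profile -> R) (i : 'I_n) (s : profile) : R :=
  inf [set v (upd s i o) | o in S i].

Definition self_bounding_d (S : 'I_n -> set R) (v : profile -> R) (d : R) : Prop :=
  forall s, in_prod S s ->
    \sum_(i < n) (v s - lower_est S v i s) <= d * v s.

End Defs.

From HB Require Import structures.
From mathcomp Require Import all_boot all_order all_algebra.
From mathcomp Require Import boolp classical_sets reals.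
From mathcomp Require Import ring lra.
Set Implicit Arguments. Unset Strict Implicit. Unset Printing Implicit Defensive.
Import Order.TTheory GRing.Theory Num.Theory.
Local Open Scope ring_scope.

(* For a profile s and replacement signals o, call
   [total_drop v s o] the sum over bidders i of v(s) - v(o_i, s_{-i}).
   1. SOS says that for comparable profiles s, t the marginal effect of
      switching coordinate i between s_i and t_i is smaller at the larger
      profile; rewritten symmetrically, v(s) - v(t_i,s_{-i}) is bounded by
      v(s_i,t_{-i}) - v(t).
   2. Walking from s to a comparable t one coordinate at a time (through the
      hybrid profiles (t_1..t_k, s_{k+1}..s_n)) and telescoping gives
      total_drop v s t <= v(s) - v(t).
   3. For arbitrary o, split o into min(o,s) <= s and max(o,s) >= s.  Each
      term of total_drop v s o equals the corresponding term for min(o,s) or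
      for max(o,s) (the other one vanishes), so by step 2 and v >= 0 the total
      drop is at most 2 v(s); if v is monotone the drop towards o is at most
      the drop towards min(o,s), so it is at most v(s).
   4. Finally the lower estimates are infima, approximated within e/(n+1) by
      actual signals, which turns the bound of step 3 into self-bounding. *)

Section SelfBounding.
Variables (R : realType) (n : nat) (S : 'I_n -> set R) (v : profile R n -> R).

Definition total_drop (s o : profile R n) : R :=
  \sum_(i < n) (v s - v (upd s i (o i))).

Lemma upd_id (s : profile R n) i : upd s i (s i) = s.
Proof. by apply: funext => j; rewrite /upd; case: eqP => // ->. Qed.

Lemma in_prod_upd (s : profile R n) i x :
  in_prod S s -> S i x -> in_prod S (upd s i x).
Proof. by move=> hs hx j; rewrite /upd; case: eqP => // ->. Qed.

Lemma sos_comparable (Hsos : SOS S v) (s t : profile R n) i :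
  in_prod S s -> in_prod S t -> pdom s t \/ pdom t s ->
  v s - v (upd s i (t i)) <= v (upd t i (s i)) - v t.
Proof.
move=> hs ht [dst|dts].
- by have := Hsos i s t hs ht dst; rewrite !upd_id.
- by have := Hsos i t s ht hs dts; rewrite !upd_id => h; lra.
Qed.

Definition hybrid (s t : profile R n) (k : nat) : profile R n :=
  fun j => if (j < k)%N then t j else s j.

Lemma hybrid_in_prod (s t : profile R n) k :
  in_prod S s -> in_prod S t -> in_prod S (hybrid s t k).
Proof. by move=> hs ht j; rewrite /hybrid; case: ifP. Qed.

Lemma upd_hybrid (s t : profile R n) (k : 'I_n) :
  upd (hybrid s t k.+1) k (s k) = hybrid s t k.
Proof.
apply: funext => j; rewrite /upd /hybrid; case: eqP => [->|/eqP ne].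
  by rewrite ltnn.
by rewrite ltnS leq_eqVlt -[(j == k :> nat)]/(j == k) (negbTE ne).
Qed.

(* Step 2: the total drop towards a comparable profile telescopes. *)
Lemma total_drop_comparable (Hsos : SOS S v) (s t : profile R n) :
  in_prod S s -> in_prod S t -> pdom s t \/ pdom t s ->
  total_drop s t <= v s - v t.
Proof.
move=> hs ht cmp.
have hyb0 : hybrid s t 0%N = s by [].
have hybn : hybrid s t n = t by apply: funext => j; rewrite /hybrid ltn_ord.
have step (k : 'I_n) :
    v s - v (upd s k (t k)) <= v (hybrid s t k) - v (hybrid s t k.+1).
  have ek : hybrid s t k.+1 k = t k by rewrite /hybrid ltnSn.
  have cmp_k : pdom s (hybrid s t k.+1) \/ pdom (hybrid s t k.+1) s.
    by case: cmp => d; [left|right] => j; rewrite /hybrid; case: ifP.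
  have := sos_comparable Hsos k hs (hybrid_in_prod k.+1 hs ht) cmp_k.
  by rewrite ek upd_hybrid.
apply: le_trans (ler_sum _ (fun k _ => step k)) _.
rewrite -(big_mkord xpredT (fun k => v (hybrid s t k) - v (hybrid s t k.+1))).
rewrite (telescope_sumr_eq (fun k => - v (hybrid s t k))) // ?hybn ?hyb0; first lra.
by move=> k _; rewrite opprK addrC.
Qed.

Section Replacement.
Hypotheses (Hnn : nonneg_on S v) (Hsos : SOS S v).
Variables (s o : profile R n).
Hypotheses (hs : in_prod S s) (ho : in_prod S o).

Let lo : profile R n := fun j => Num.min (o j) (s j).
Let hi : profile R n := fun j => Num.max (o j) (s j).

Let lo_in : in_prod S lo. Proof. by move=> j; rewrite /lo; case: leP. Qed.
Let hi_in : in_prod S hi. Proof. by move=> j; rewrite /hi; case: leP. Qed.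
Let s_lo : pdom s lo. Proof. by move=> j; rewrite /lo ge_min lexx orbT. Qed.
Let hi_s : pdom hi s. Proof. by move=> j; rewrite /hi le_max lexx orbT. Qed.

(* Step 3, monotone case: replacing o_i by min(o_i,s_i) only lowers v. *)
Lemma total_drop_monotone : monotone_on S v -> total_drop s o <= v s.
Proof.
move=> Hmon; have := total_drop_comparable Hsos hs lo_in (or_introl s_lo).
have := Hnn lo_in; suff : total_drop s o <= total_drop s lo by lra.
apply: ler_sum => i _; suff : v (upd s i (lo i)) <= v (upd s i (o i)) by lra.
apply: Hmon; try exact: in_prod_upd.
by move=> j; rewrite /upd; case: eqP => _ //; rewrite /lo ge_min lexx.
Qed.

(* Step 3, general case: the drop towards o splits into the drops towards
   min(o,s) and max(o,s), each bounded by v(s). *)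
Lemma total_drop_general : total_drop s o <= 2 * v s.
Proof.
have -> : total_drop s o = total_drop s lo + total_drop s hi.
  rewrite /total_drop -big_split; apply: eq_bigr => i _; rewrite /lo /hi.
  by case: leP => _ /=; rewrite upd_id subrr ?addr0 ?add0r.
have := total_drop_comparable Hsos hs lo_in (or_introl s_lo).
have := total_drop_comparable Hsos hs hi_in (or_intror hi_s).
have := Hnn lo_in; have := Hnn hi_in; lra.
Qed.

End Replacement.

(* Step 4: a bound on total drops towards all signals in S bounds the sum of
   gaps to the lower estimates, by approximating each infimum. *)
Lemma self_bound_of_total_drop (d : R) (Hnn : nonneg_on S v) (s : profile R n) :
  in_prod S s ->
  (forall o, in_prod S o -> total_drop s o <= d * v s) ->
  \sum_(i < n) (v s - lower_est S v i s) <= d * v s.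
Proof.
move=> hs H; apply/ler_addgt0Pr => e e0.
pose eps := e / (n%:R + 1).
have n1 : (0 : R) < n%:R + 1 by rewrite ltr_pwDr.
have eps0 : 0 < eps by rewrite divr_gt0.
have epsE : eps * n%:R = e - eps by rewrite /eps; field; lra.
have near_inf (i : 'I_n) :
    exists o, S i o /\ v (upd s i o) < lower_est S v i s + eps.
  have hinf : has_inf [set v (upd s i o) | o in S i].
    split; first by exists (v (upd s i (s i))), (s i).
    by exists 0 => _ [o ho <-]; exact: Hnn _ (in_prod_upd hs ho).
  have [_ [o ho <-] lt] := inf_adherent eps0 hinf.
  by exists o.
have [o Ho] := choice near_inf.
have := H o (fun i => (Ho i).1).
have : \sum_(i < n) (v s - lower_est S v i s) <=
       total_drop s o + \sum_(i < n) eps.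
  rewrite -big_split; apply: ler_sum => i _ /=; have := (Ho i).2; lra.
rewrite sumr_const card_ord -mulr_natr epsE; lra.
Qed.

End SelfBounding.

Theorem mainTheorem1 (R : realType) (n : nat) (S : 'I_n -> set R)
    (v : profile R n -> R) :
  nonneg_on S v -> SOS S v ->
  (monotone_on S v -> self_bounding_d S v 1) /\ self_bounding_d S v 2.
Proof.
move=> Hnn Hsos; split.
- move=> Hmon s hs; apply: self_bound_of_total_drop => // o ho.
  by rewrite mul1r; exact: (total_drop_monotone Hnn Hsos hs ho Hmon).
- move=> s hs; apply: self_bound_of_total_drop => // o ho.
  exact: (total_drop_general Hnn Hsos hs ho).
Qed.
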